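(* Let $X=[\alpha,\beta]$ be a compact interval, $w$ a positive continuous function on $X$, and $\langle f,g\rangle_w=\int_Xf(x)\overline{g(x)}w(x)\,dx$. Let $B_1,\dots,B_n\in C(X)$ be linearly independent, $U_n$ their span, and $S=(s_{i,j})$ with $s_{i,j}=\langle B_i,B_j\rangle_w$. Assume $S$ is tridiagonal ($s_{i,j}=0$ if $|i-j|\ge2$) and row diagonally dominant with factor $c\in(0,1)$, i.e. $|s_{j-1,j}|+|s_{j,j+1}|\le c\,|s_{j,j}|$ for $j=1,\dots,n$, with the convention $s_{0,1}=s_{n,n+1}=0$. Then $$\|P^{U_n}\|_{op}\le\frac{\max_{x\in X}\sum_{j=1}^n|B_j(x)|}{1-c}\max_{1\le j\le n}\frac{\int_X|B_j(y)|w(y)\,dy}{\int_X|B_j(y)|^2w(y)\,dy}.$$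
   Context: $P^{U_n}:C(X)\to C(X)$ maps $f$ to its best approximation from $U_n$ in the norm $\|f\|_w=\sqrt{\langle f,f\rangle_w}$ (the $\langle\cdot,\cdot\rangle_w$-orthogonal projection onto $U_n$), and $\|P^{U_n}\|_{op}=\sup_{f\ne0}\|P^{U_n}f\|_X/\|f\|_X$ with $\|f\|_X=\max_{x\in X}|f(x)|$. *)

From Stdlib Require Import Reals List.
From Coquelicot Require Import Coquelicot.
Open Scope R_scope.

Definition CInt (f : R -> C) (a b : R) : C :=
  @RInt C_R_CompleteNormedModule f a b.

Definition inX (al be x : R) : Prop := al <= x <= be.

Definition cont_on_X {V : UniformSpace} (al be : R) (f : R -> V) : Prop :=
  forall x, inX al be x ->
    filterlim f (within (inX al be) (locally x)) (locally (f x)).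

Definition inner_w (al be : R) (w : R -> R) (f g : R -> C) : C :=
  CInt (fun x => (f x * Cconj (g x) * RtoC (w x))%C) al be.

Definition Csum (n : nat) (F : nat -> C) : C :=
  fold_right Cplus (RtoC 0) (map F (seq 0 n)).

Definition lin_indep (al be : R) (n : nat) (B : nat -> R -> C) : Prop :=
  forall a : nat -> C,
    (forall x, inX al be x -> Csum n (fun j => (a j * B j x)%C) = RtoC 0) ->
    forall j, (j < n)%nat -> a j = RtoC 0.

Definition in_span (al be : R) (n : nat) (B : nat -> R -> C) (u : R -> C) : Prop :=
  exists a : nat -> C, forall x, inX al be x -> u x = Csum n (fun j => (a j * B j x)%C).

Definition is_proj (al be : R) (w : R -> R) (n : nat) (B : nat -> R -> C)
  (f g : R -> C) : Prop :=
  in_span al be n B g /\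
  forall u, in_span al be n B u ->
    inner_w al be w (fun x => (f x - g x)%C) u = RtoC 0.

Definition supnorm (al be : R) (f : R -> C) : R :=
  real (Lub_Rbar (fun r => exists x, inX al be x /\ r = Cmod (f x))).

Definition opnorm_proj (al be : R) (w : R -> R) (n : nat) (B : nat -> R -> C) : Rbar :=
  Lub_Rbar (fun r => exists f g : R -> C,
    cont_on_X al be f /\ (exists x, inX al be x /\ f x <> RtoC 0) /\
    is_proj al be w n B f g /\
    r = supnorm al be g / supnorm al be f).

(* Gram matrix entries s_{i,j} = <B_i, B_j>_w  (0-indexed) *)
Definition gram (al be : R) (w : R -> R) (B : nat -> R -> C) (i j : nat) : C :=
  inner_w al be w (B i) (B j).

(* max of a real list (all entries here are nonnegative; empty max = 0) *)
Definition maxlist (l : list R) : R := fold_right Rmax 0 l.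

(* Let g = P f = sum_k a_k B_k be the projection of f.  Testing the orthogonality
   f - g orthogonal to B_j gives the normal equations  sum_k a_k s_{k,j} = <f, B_j>_w,
   i.e. the transposed Gram system.  Since S is Hermitian, |s_{k,j}| = |s_{j,k}|,
   so row dominance of the tridiagonal S is column dominance:
   sum_{k <> j} |s_{k,j}| <= c |s_{j,j}|.  Looking at the index j where |a_j| is
   maximal, |a_j| |s_{j,j}| <= |<f,B_j>| + c |a_j| |s_{j,j}|, and
   |<f,B_j>| <= ||f||_X int |B_j| w, s_{j,j} = int |B_j|^2 w > 0; hence
   max_k |a_k| <= ||f||_X K / (1 - c) with K the largest ratio of the two
   integrals.  Finally |g(x)| <= max_k |a_k| sum_k |B_k(x)|, which bounds
   ||P f||_X / ||f||_X by the claimed constant. *)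

From Stdlib Require Import Reals List Lra Lia FunctionalExtensionality Classical.
From Coquelicot Require Import Coquelicot.
Open Scope R_scope.

Definition rsum (n : nat) (F : nat -> R) : R := fold_right Rplus 0 (map F (seq 0 n)).

Lemma fold_Cplus_shift (l : list C) z : fold_right Cplus z l = (fold_right Cplus (RtoC 0) l + z)%C.
Proof. induction l; simpl. - ring. - rewrite IHl. ring. Qed.

Lemma fold_Rplus_shift (l : list R) z : fold_right Rplus z l = fold_right Rplus 0 l + z.
Proof. induction l; simpl. - ring. - rewrite IHl. ring. Qed.

Lemma Csum_S n F : Csum (S n) F = (Csum n F + F n)%C.
Proof.
  unfold Csum. rewrite seq_S, map_app, fold_right_app. simpl.
  rewrite fold_Cplus_shift. f_equal. ring.
Qed.

Lemma rsum_S n F : rsum (S n) F = rsum n F + F n.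
Proof.
  unfold rsum. rewrite seq_S, map_app, fold_right_app. simpl.
  rewrite fold_Rplus_shift. f_equal. ring.
Qed.

Lemma Csum_ext n F G : (forall k, (k < n)%nat -> F k = G k) -> Csum n F = Csum n G.
Proof.
  induction n; intros H; [reflexivity|].
  rewrite !Csum_S, IHn by (intros; apply H; lia). rewrite H by lia. reflexivity.
Qed.

Lemma rsum_le n F G : (forall k, (k < n)%nat -> F k <= G k) -> rsum n F <= rsum n G.
Proof.
  induction n; intros H; [unfold rsum; simpl; lra|].
  rewrite !rsum_S. assert (F n <= G n) by (apply H; lia).
  assert (rsum n F <= rsum n G) by (apply IHn; intros; apply H; lia). lra.
Qed.

Lemma rsum_ge0 n F : (forall k, (k < n)%nat -> 0 <= F k) -> 0 <= rsum n F.
Proof.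
  induction n; intros H; [unfold rsum; simpl; lra|].
  rewrite rsum_S. assert (0 <= F n) by (apply H; lia).
  assert (0 <= rsum n F) by (apply IHn; intros; apply H; lia). lra.
Qed.

Lemma rsum_mult_l n F c : c * rsum n F = rsum n (fun k => c * F k).
Proof. induction n; [unfold rsum; simpl; ring|]. rewrite !rsum_S, <- IHn. ring. Qed.

Lemma Csum_mult_r n F z : (Csum n F * z)%C = Csum n (fun k => F k * z)%C.
Proof. induction n; [unfold Csum; simpl; ring|]. rewrite !Csum_S, <- IHn. ring. Qed.

Lemma Cmod_Csum n F : Cmod (Csum n F) <= rsum n (fun k => Cmod (F k)).
Proof.
  induction n; [unfold Csum, rsum; simpl; rewrite Cmod_0; lra|].
  rewrite Csum_S, rsum_S. eapply Rle_trans; [apply Cmod_triangle|]. lra.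
Qed.

Definition unit_coef (i k : nat) : C := if Nat.eqb k i then RtoC 1 else RtoC 0.

Lemma Csum_unit_coef n F i : (i < n)%nat -> Csum n (fun k => unit_coef i k * F k)%C = F i.
Proof.
  unfold unit_coef. induction n; intros H; [lia|].
  rewrite Csum_S; cbv beta. destruct (Nat.eqb_spec n i).
  - subst. rewrite (Csum_ext _ _ (fun _ => RtoC 0)).
    + replace (Csum i (fun _ => RtoC 0)) with (RtoC 0); [ring|].
      clear. induction i; [reflexivity|]. rewrite Csum_S, <- IHi. ring.
    + intros k Hk. destruct (Nat.eqb_spec k i); [lia|ring].
  - rewrite IHn by lia. ring.
Qed.

Lemma Csum_split n F j : (j < n)%nat ->
  Csum n F = (F j + Csum n (fun k => if Nat.eqb k j then RtoC 0 else F k))%C.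
Proof.
  induction n; intros H; [lia|]. rewrite !Csum_S. destruct (Nat.eqb_spec n j).
  - subst. rewrite (Csum_ext j (fun k => if Nat.eqb k j then _ else _) F); [ring|].
    intros k Hk. destruct (Nat.eqb_spec k j); [lia|reflexivity].
  - rewrite IHn by lia. ring.
Qed.

Lemma rsum_band n (F : nat -> R) j :
  (forall k, (k < n)%nat -> (k + 2 <= j \/ j + 2 <= k)%nat -> F k = 0) ->
  rsum n (fun k => if Nat.eqb k j then 0 else F k) =
  (match j with O => 0 | S p => if Nat.ltb p n then F p else 0 end)
  + (if Nat.ltb (S j) n then F (S j) else 0).
Proof.
  induction n; intros H; [destruct j; unfold rsum; simpl; ring|].
  rewrite rsum_S, IHn by (intros; apply H; lia).
  destruct (Nat.eqb_spec n j) as [->|Hne];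
  destruct j as [|p];
  repeat match goal with |- context [Nat.ltb ?a ?b] => destruct (Nat.ltb_spec a b) end;
  try lia;
  first [ ring | rewrite (H n) by lia; ring
        | replace n with 1%nat by lia; ring | replace n with p by lia; ring
        | replace n with (S (S p)) by lia; ring ].
Qed.

Lemma maxlist_ge (l : list R) x : In x l -> x <= maxlist l.
Proof.
  induction l; simpl; intros H; [contradiction|].
  destruct H as [->|H]; [apply Rmax_l|].
  eapply Rle_trans; [apply IHl; auto | apply Rmax_r].
Qed.

Lemma maxlist_ge0 (l : list R) : 0 <= maxlist l.
Proof. induction l; simpl; [lra|]. eapply Rle_trans; [apply IHl | apply Rmax_r]. Qed.

Lemma argmax (phi : nat -> R) n : (0 < n)%nat ->
  exists j, (j < n)%nat /\ forall k, (k < n)%nat -> phi k <= phi j.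
Proof.
  induction n; intros H; [lia|]. destruct n.
  - exists 0%nat. split; [lia|]. intros k Hk. replace k with 0%nat by lia. lra.
  - destruct IHn as [j [Hj Hm]]; [lia|].
    destruct (Rle_dec (phi j) (phi (S n))).
    + exists (S n). split; [lia|]. intros k Hk. destruct (Nat.eq_dec k (S n)); [subst; lra|].
      eapply Rle_trans; [apply Hm; lia | auto].
    + exists j. split; [lia|]. intros k Hk. destruct (Nat.eq_dec k (S n)); [subst; lra|]. apply Hm. lia.
Qed.

Definition offdiag_col_sum (n : nat) (s : nat -> nat -> C) (j : nat) : R :=
  rsum n (fun k => if Nat.eqb k j then 0 else Cmod (s k j)).

(* It is proved at an index where |a_j| is maximal. *)
Lemma diag_dominant_solution_bound (n : nat) (s : nat -> nat -> C) (a b : nat -> C) (c M : R) :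
  c < 1 ->
  (forall j, (j < n)%nat -> 0 < Cmod (s j j)) ->
  (forall j, (j < n)%nat -> offdiag_col_sum n s j <= c * Cmod (s j j)) ->
  (forall j, (j < n)%nat -> Csum n (fun k => a k * s k j)%C = b j) ->
  (forall j, (j < n)%nat -> Cmod (b j) <= M * Cmod (s j j)) ->
  forall k, (k < n)%nat -> Cmod (a k) <= M / (1 - c).
Proof.
  intros Hc Hdiag Hdom Hsys Hb k Hk.
  destruct (argmax (fun k => Cmod (a k)) n) as [j [Hj Hmax]]; [lia|].
  apply Rle_trans with (Cmod (a j)); [now apply Hmax|].
  set (r := Csum n (fun k => if Nat.eqb k j then RtoC 0 else (a k * s k j)%C)).
  assert (Hr : Cmod r <= Cmod (a j) * (c * Cmod (s j j))).
  { eapply Rle_trans; [apply Cmod_Csum|].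
    eapply Rle_trans;
      [apply (rsum_le _ _ (fun k => Cmod (a j) * (if Nat.eqb k j then 0 else Cmod (s k j))))|].
    - intros l Hl. destruct (Nat.eqb l j); [rewrite Cmod_0; lra|].
      rewrite Cmod_mult. apply Rmult_le_compat_r; [apply Cmod_ge_0 | now apply Hmax].
    - rewrite <- rsum_mult_l. apply Rmult_le_compat_l; [apply Cmod_ge_0 | now apply Hdom]. }
  assert (Hdiag_eq : (a j * s j j)%C = (b j - r)%C).
  { rewrite <- (Hsys j Hj), (Csum_split _ _ j Hj). unfold r. ring. }
  assert (Hj_le : Cmod (a j) * Cmod (s j j) <= M * Cmod (s j j) + Cmod (a j) * (c * Cmod (s j j))).
  { rewrite <- Cmod_mult, Hdiag_eq. unfold Cminus.
    eapply Rle_trans; [apply Cmod_triangle|]. rewrite Cmod_opp. specialize (Hb j Hj). lra. }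
  apply Rle_div_r; [lra|].
  apply Rmult_le_reg_r with (Cmod (s j j)); [auto|]. nra.
Qed.

Lemma lub_upper (E : R -> Prop) e M : E e -> (forall r, E r -> r <= M) ->
  forall r, E r -> r <= real (Lub_Rbar E).
Proof.
  intros He HM. destruct (Lub_Rbar_correct E) as [Hub Hl].
  assert (H1 : Rbar_le (Lub_Rbar E) M) by (apply Hl; intros r Hr; apply HM; auto).
  assert (H2 : Rbar_le e (Lub_Rbar E)) by (apply Hub; auto).
  destruct (Lub_Rbar E) as [l| |]; simpl in *; try contradiction.
  intros r Hr. apply (Hub r Hr).
Qed.

Lemma lub_le (E : R -> Prop) M : (forall r, E r -> r <= M) -> 0 <= M -> real (Lub_Rbar E) <= M.
Proof.
  intros HM H0. destruct (Lub_Rbar_correct E) as [_ Hl].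
  assert (H1 : Rbar_le (Lub_Rbar E) M) by (apply Hl; intros r Hr; apply HM; auto).
  destruct (Lub_Rbar E); simpl in *; try contradiction; auto.
Qed.

(* Clamping to X = [al, be] turns a function continuous on X into a function
   continuous on all of R with the same values on X; this gives access to the
   global continuity and integrability results of the library. *)
Definition clamp (al be x : R) := Rmax al (Rmin be x).

Lemma clamp_X al be x : al <= be -> inX al be (clamp al be x).
Proof. intros. unfold inX, clamp, Rmax, Rmin. repeat destruct Rle_dec; lra. Qed.

Lemma clamp_id al be x : inX al be x -> clamp al be x = x.
Proof. unfold inX, clamp; intros. rewrite Rmin_right by lra. rewrite Rmax_right; lra. Qed.

Lemma clamp_lip al be x y : al <= be -> Rabs (clamp al be y - clamp al be x) <= Rabs (y - x).
Proof.
  intros. unfold clamp, Rmax, Rmin.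
  repeat destruct Rle_dec; unfold Rabs; repeat destruct Rcase_abs; lra.
Qed.

Lemma cont_clamp {V : UniformSpace} al be (f : R -> V) :
  al <= be -> cont_on_X al be f -> forall x, continuous (fun y => f (clamp al be y)) x.
Proof.
  intros Hab Hf x. unfold continuous.
  apply filterlim_comp with (G := within (inX al be) (locally (clamp al be x))).
  - intros P [eps H]. exists eps. intros y Hy. apply H; [|apply clamp_X; lra].
    change (Rabs (clamp al be y - clamp al be x) < eps).
    eapply Rle_lt_trans; [apply clamp_lip; lra | exact Hy].
  - apply Hf. apply clamp_X; lra.
Qed.

Lemma inX_Rmin_Rmax al be x : al <= be -> Rmin al be <= x <= Rmax al be -> inX al be x.
Proof. intros. unfold inX, Rmin, Rmax in *. destruct Rle_dec; lra. Qed.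

Lemma contC_fst (F : R -> C) x :
  @continuous R_UniformSpace C_UniformSpace F x -> continuous (fun y => fst (F y)) x.
Proof.
  intros H. apply (@continuous_comp R_UniformSpace C_UniformSpace R_UniformSpace F fst x H).
  destruct (F x). apply (@continuous_fst R_UniformSpace R_UniformSpace).
Qed.

Lemma contC_snd (F : R -> C) x :
  @continuous R_UniformSpace C_UniformSpace F x -> continuous (fun y => snd (F y)) x.
Proof.
  intros H. apply (@continuous_comp R_UniformSpace C_UniformSpace R_UniformSpace F snd x H).
  destruct (F x). apply (@continuous_snd R_UniformSpace R_UniformSpace).
Qed.

Lemma contC_intro (F : R -> C) x :
  continuous (fun y => fst (F y)) x -> continuous (fun y => snd (F y)) x ->
  @continuous R_UniformSpace C_UniformSpace F x.
Proof.
  intros Hf Hg. replace F with (fun y => (fst (F y), snd (F y)) : C)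
    by (apply functional_extensionality; intros; symmetry; apply surjective_pairing).
  apply filterlim_locally. intros eps.
  apply filterlim_locally with (eps := eps) in Hf. apply filterlim_locally with (eps := eps) in Hg.
  generalize (filter_and _ _ Hf Hg). apply filter_imp. intros y [H1 H2]. split; assumption.
Qed.

Lemma cR_mult (f g : R -> R) x : continuous f x -> continuous g x -> continuous (fun y => f y * g y) x.
Proof. intros. apply (@continuous_mult R_UniformSpace R_AbsRing); auto. Qed.

Lemma cR_plus (f g : R -> R) x : continuous f x -> continuous g x -> continuous (fun y => f y + g y) x.
Proof. intros. apply (@continuous_plus R_UniformSpace R_AbsRing R_NormedModule); auto. Qed.

Lemma cR_opp (f : R -> R) x : continuous f x -> continuous (fun y => - f y) x.
Proof. intros. apply (@continuous_opp R_UniformSpace R_AbsRing R_NormedModule); auto. Qed.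

Lemma cR_minus (f g : R -> R) x : continuous f x -> continuous g x -> continuous (fun y => f y - g y) x.
Proof. intros. apply cR_plus; [|apply cR_opp]; auto. Qed.

Lemma norm_Cmod (z : C) : @norm _ C_R_NormedModule z = Cmod z.
Proof.
  destruct z as [u v]. unfold norm. simpl. unfold prod_norm, Cmod. simpl. f_equal.
  change (@norm _ R_NormedModule u) with (Rabs u). change (@norm _ R_NormedModule v) with (Rabs v).
  rewrite !Rmult_1_r. generalize (Rsqr_abs u) (Rsqr_abs v). unfold Rsqr. intros -> ->. ring.
Qed.

Lemma cont_Cmod (F : R -> C) x :
  @continuous R_UniformSpace C_UniformSpace F x -> continuous (fun y => Cmod (F y)) x.
Proof.
  intros H. apply (continuous_ext (fun y => @norm _ C_R_NormedModule (F y))).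
  { intros. now rewrite norm_Cmod. }
  apply (@continuous_comp R_UniformSpace C_UniformSpace R_UniformSpace F (@norm _ C_R_NormedModule) x H).
  apply (@filterlim_norm R_AbsRing C_R_NormedModule).
Qed.

Ltac cont_real := repeat match goal with
  | |- continuous (fun y => _ * _) _ => apply cR_mult
  | |- continuous (fun y => _ + _) _ => apply cR_plus
  | |- continuous (fun y => _ - _) _ => apply cR_minus
  | |- continuous (fun y => - _) _ => apply cR_opp
  | |- continuous (fun y => fst _) _ => apply contC_fst; assumption
  | |- continuous (fun y => snd _) _ => apply contC_snd; assumption
  | |- continuous (fun y => ?k) _ => apply continuous_const
  | |- _ => assumption
  end.

Lemma cont_integrand (F G : R -> C) (W : R -> R) x :
  @continuous R_UniformSpace C_UniformSpace F x -> @continuous R_UniformSpace C_UniformSpace G x ->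
  continuous W x ->
  @continuous R_UniformSpace C_UniformSpace (fun y => (F y * Cconj (G y) * RtoC (W y))%C) x.
Proof. intros. apply contC_intro; simpl; cont_real. Qed.

Lemma cont_on_X_bounded al be (f : R -> C) : al <= be -> cont_on_X al be f ->
  exists M, forall x, inX al be x -> Cmod (f x) <= M.
Proof.
  intros Hab Hf.
  destruct (continuity_ab_maj (fun y => Cmod (f (clamp al be y))) al be Hab) as [m [Hm _]].
  { intros y _. apply continuity_pt_filterlim, (cont_Cmod (fun y => f (clamp al be y))), cont_clamp; auto. }
  exists (Cmod (f (clamp al be m))). intros x Hx. specialize (Hm x Hx). simpl in Hm.
  rewrite clamp_id in Hm; auto.
Qed.

Lemma RInt_pos (phi : R -> R) al be x0 : al < be -> (forall x, continuous phi x) ->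
  (forall x, inX al be x -> 0 <= phi x) -> inX al be x0 -> 0 < phi x0 -> 0 < RInt phi al be.
Proof.
  intros Hab Hc Hnn Hx0 Hp.
  assert (Hl : locally x0 (fun y => phi x0 / 2 < phi y)).
  { specialize (Hc x0). apply filterlim_locally with (eps := mkposreal (phi x0 / 2) ltac:(lra)) in Hc.
    revert Hc. apply filter_imp. intros y Hy. change (Rabs (phi y - phi x0) < phi x0 / 2) in Hy.
    apply Rabs_def2 in Hy. lra. }
  destruct Hl as [[eps Heps_pos] Heps]; simpl in Heps.
  set (u := Rmax al (x0 - eps / 2)). set (v := Rmin be (x0 + eps / 2)).
  assert (Hu : al <= u <= x0) by (unfold u, Rmax, inX in *; destruct Rle_dec; lra).
  assert (Hv : x0 <= v <= be) by (unfold v, Rmin, inX in *; destruct Rle_dec; lra).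
  assert (Huv : u < v) by (unfold u, v, Rmax, Rmin, inX in *; repeat destruct Rle_dec; lra).
  assert (Hex : forall a b, ex_RInt phi a b)
    by (intros; apply (@ex_RInt_continuous R_CompleteNormedModule); intros; apply Hc).
  rewrite <- (RInt_Chasles phi al u be), <- (RInt_Chasles phi u v be) by auto.
  change (0 < RInt phi al u + (RInt phi u v + RInt phi v be)).
  assert (0 <= RInt phi al u) by (apply RInt_ge_0; auto; try lra; intros; apply Hnn; unfold inX; lra).
  assert (0 <= RInt phi v be) by (apply RInt_ge_0; auto; try lra; intros; apply Hnn; unfold inX; lra).
  assert (0 < RInt phi u v).
  { apply RInt_gt_0; auto. intros x Hx. apply Rlt_trans with (phi x0 / 2); [lra|].
    apply Heps. change (Rabs (x - x0) < eps). unfold u, v, Rmax, Rmin in Hx.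
    repeat destruct Rle_dec; apply Rabs_def1; lra. }
  lra.
Qed.

Notation isC := (@is_RInt C_R_NormedModule).

Lemma isC_pair (h : R -> C) a b (u v : R) :
  is_RInt (fun x => fst (h x)) a b u -> is_RInt (fun x => snd (h x)) a b v -> isC h a b (u, v).
Proof. intros. apply (@is_RInt_fct_extend_pair R_NormedModule R_NormedModule); auto. Qed.

Lemma isC_fst (h : R -> C) a b I : isC h a b I -> is_RInt (fun x => fst (h x)) a b (fst I).
Proof. intros. apply (@is_RInt_fct_extend_fst R_NormedModule R_NormedModule); auto. Qed.

Lemma isC_snd (h : R -> C) a b I : isC h a b I -> is_RInt (fun x => snd (h x)) a b (snd I).
Proof. intros. apply (@is_RInt_fct_extend_snd R_NormedModule R_NormedModule); auto. Qed.

Lemma is_RInt_zero a b : is_RInt (fun _ => 0) a b 0.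
Proof.
  generalize (@is_RInt_const R_NormedModule a b 0).
  replace (scal (b - a) (0 : R_NormedModule)) with 0; auto.
  change (scal (b - a) (0 : R_NormedModule)) with ((b - a) * 0). ring.
Qed.

Lemma isC_conj (h : R -> C) a b I : isC h a b I -> isC (fun x => Cconj (h x)) a b (Cconj I).
Proof.
  intros H. destruct I as [u v]. apply isC_pair; simpl.
  - apply (isC_fst _ _ _ _ H).
  - apply (@is_RInt_opp R_NormedModule _ _ _ v). apply (isC_snd _ _ _ _ H).
Qed.

Lemma isC_mult_l (z : C) (h : R -> C) a b I : isC h a b I -> isC (fun x => z * h x)%C a b (z * I)%C.
Proof.
  intros H. destruct I as [u v], z as [p q]. apply isC_pair; simpl.
  - apply (@is_RInt_minus R_NormedModule).
    + apply (@is_RInt_scal R_NormedModule _ _ _ p _ (isC_fst _ _ _ _ H)).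
    + apply (@is_RInt_scal R_NormedModule _ _ _ q _ (isC_snd _ _ _ _ H)).
  - apply (@is_RInt_plus R_NormedModule).
    + apply (@is_RInt_scal R_NormedModule _ _ _ p _ (isC_snd _ _ _ _ H)).
    + apply (@is_RInt_scal R_NormedModule _ _ _ q _ (isC_fst _ _ _ _ H)).
Qed.

Lemma isC_RtoC (r : R -> R) a b I : is_RInt r a b I -> isC (fun x => RtoC (r x)) a b (RtoC I).
Proof. intros. apply isC_pair; simpl; auto using is_RInt_zero. Qed.

Lemma isC_Csum n (G : nat -> R -> C) I a b : (forall k, (k < n)%nat -> isC (G k) a b (I k)) ->
  isC (fun x => Csum n (fun k => G k x)) a b (Csum n I).
Proof.
  induction n; intros H.
  - apply (isC_RtoC (fun _ => 0)), is_RInt_zero.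
  - rewrite Csum_S. apply (is_RInt_ext (fun x => Csum n (fun k => G k x) + G n x)%C).
    + intros; now rewrite Csum_S.
    + apply (@is_RInt_plus C_R_NormedModule); [apply IHn; intros; apply H | apply H]; lia.
Qed.

Lemma CInt_unique (h : R -> C) a b I : isC h a b I -> CInt h a b = I.
Proof. intros. apply (@is_RInt_unique C_R_CompleteNormedModule). assumption. Qed.

Lemma is_RInt_on_X al be (phi phit : R -> R) : al <= be -> (forall x, continuous phit x) ->
  (forall x, inX al be x -> phit x = phi x) -> is_RInt phi al be (RInt phi al be).
Proof.
  intros Hab Hc He.
  rewrite (RInt_ext phi phit) by (intros; symmetry; apply He, inX_Rmin_Rmax; auto; lra).
  apply (is_RInt_ext phit); [intros; apply He, inX_Rmin_Rmax; auto; lra|].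
  apply (@RInt_correct R_CompleteNormedModule), (@ex_RInt_continuous R_CompleteNormedModule).
  intros; apply Hc.
Qed.

Lemma isC_on_X al be (h ht : R -> C) : al <= be -> (forall x, @continuous R_UniformSpace C_UniformSpace ht x) ->
  (forall x, inX al be x -> ht x = h x) -> isC h al be (CInt h al be).
Proof.
  intros Hab Hc He.
  assert (Hi : isC h al be (CInt ht al be)).
  { apply (is_RInt_ext ht); [intros; apply He, inX_Rmin_Rmax; auto; lra|].
    apply (@RInt_correct C_R_CompleteNormedModule), (@ex_RInt_continuous C_R_CompleteNormedModule).
    intros; apply Hc. }
  rewrite (CInt_unique _ _ _ _ Hi). exact Hi.
Qed.

Section WeightedInnerProduct.

Variables (al be : R) (w : R -> R).
Hypothesis Hab : al <= be.
Hypothesis Hw : cont_on_X al be w.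

Lemma isC_inner (F G : R -> C) : cont_on_X al be F -> cont_on_X al be G ->
  isC (fun x => F x * Cconj (G x) * RtoC (w x))%C al be (inner_w al be w F G).
Proof.
  intros HF HG.
  apply (isC_on_X al be _ (fun y => F (clamp al be y) * Cconj (G (clamp al be y)) * RtoC (w (clamp al be y)))%C);
    auto.
  - intros x. apply cont_integrand; apply cont_clamp; auto.
  - intros x Hx. rewrite clamp_id; auto.
Qed.

Lemma inner_conj_sym (F G : R -> C) : cont_on_X al be F -> cont_on_X al be G ->
  inner_w al be w F G = Cconj (inner_w al be w G F).
Proof.
  intros HF HG. apply CInt_unique.
  apply (is_RInt_ext (fun x => Cconj (G x * Cconj (F x) * RtoC (w x))))%C.
  - intros x _. apply injective_projections; simpl; ring.
  - apply isC_conj, isC_inner; auto.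
Qed.

Lemma inner_self (F : R -> C) : cont_on_X al be F ->
  inner_w al be w F F = RtoC (RInt (fun y => Cmod (F y) ^ 2 * w y) al be).
Proof.
  intros HF. apply CInt_unique.
  apply (is_RInt_ext (fun x => RtoC (Cmod (F x) ^ 2 * w x))).
  - intros x _. unfold Cmod. rewrite pow2_sqrt by nra. apply injective_projections; simpl; ring.
  - apply isC_RtoC, (is_RInt_on_X al be _ (fun y => Cmod (F (clamp al be y)) ^ 2 * w (clamp al be y))); auto.
    + intros x. simpl. cont_real; try apply cont_Cmod; apply cont_clamp; auto.
    + intros x Hx. rewrite clamp_id; auto.
Qed.

Lemma inner_bound (f F : R -> C) (Fs : R) : (forall x, inX al be x -> 0 < w x) ->
  cont_on_X al be f -> cont_on_X al be F -> (forall x, inX al be x -> Cmod (f x) <= Fs) ->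
  Cmod (inner_w al be w f F) <= Fs * RInt (fun y => Cmod (F y) * w y) al be.
Proof.
  intros Hwp Hf HF HFs. rewrite <- norm_Cmod.
  apply (norm_RInt_le (fun x => f x * Cconj (F x) * RtoC (w x))%C (fun y => Fs * (Cmod (F y) * w y)) al be);
    auto.
  - intros x Hx. rewrite norm_Cmod, !Cmod_mult, Cmod_conj, Cmod_R.
    assert (0 < w x) by (apply Hwp; auto). rewrite Rabs_right by lra.
    assert (0 <= Cmod (F x)) by apply Cmod_ge_0. specialize (HFs x Hx).
    rewrite Rmult_assoc. apply Rmult_le_compat_r; nra.
  - apply isC_inner; auto.
  - apply (@is_RInt_scal R_NormedModule _ _ _ Fs).
    apply (is_RInt_on_X al be _ (fun y => Cmod (F (clamp al be y)) * w (clamp al be y))); auto.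
    + intros x. apply cR_mult; [apply cont_Cmod|]; apply cont_clamp; auto.
    + intros x Hx. rewrite clamp_id; auto.
Qed.

Lemma normal_equation n (B : nat -> R -> C) (f g : R -> C) (a : nat -> C) i :
  cont_on_X al be f -> (forall k, (k < n)%nat -> cont_on_X al be (B k)) -> (i < n)%nat ->
  (forall x, inX al be x -> g x = Csum n (fun k => a k * B k x)%C) ->
  inner_w al be w (fun x => f x - g x)%C (B i) = RtoC 0 ->
  inner_w al be w f (B i) = Csum n (fun k => a k * gram al be w B k i)%C.
Proof.
  intros Hf HB Hi Hg Horth.
  assert (Hdiff : isC (fun x => (f x - g x) * Cconj (B i x) * RtoC (w x))%C al be
             (inner_w al be w f (B i) - Csum n (fun k => a k * gram al be w B k i))%C).
  { apply (is_RInt_ext (fun x => f x * Cconj (B i x) * RtoC (w x)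
             - Csum n (fun k => a k * (B k x * Cconj (B i x) * RtoC (w x))))%C).
    - intros x Hx. rewrite (Hg x) by (apply inX_Rmin_Rmax; auto; lra).
      rewrite (Csum_ext n (fun k => a k * (B k x * Cconj (B i x) * RtoC (w x)))%C
                 (fun k => a k * B k x * (Cconj (B i x) * RtoC (w x)))%C) by (intros; ring).
      rewrite <- Csum_mult_r. match goal with |- ?l = ?r => change (@eq C l r) end. ring.
    - apply (@is_RInt_minus C_R_NormedModule); [apply isC_inner; auto|].
      apply (isC_Csum n (fun k x => a k * (B k x * Cconj (B i x) * RtoC (w x)))%C).
      intros k Hk. apply isC_mult_l, isC_inner; auto. }
  assert (Hzero : (inner_w al be w f (B i) - Csum n (fun k => a k * gram al be w B k i))%C = RtoC 0).
  { rewrite <- Horth. symmetry. apply CInt_unique, Hdiff. }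
  set (lhs := inner_w al be w f (B i)) in *. set (rhs := Csum n _) in *.
  replace lhs with ((lhs - rhs) + rhs)%C by ring. rewrite Hzero. ring.
Qed.

End WeightedInnerProduct.

Lemma lin_indep_nonzero al be n (B : nat -> R -> C) j :
  lin_indep al be n B -> (j < n)%nat -> exists x, inX al be x /\ B j x <> RtoC 0.
Proof.
  intros Hind Hj. apply NNPP. intros Hno.
  assert (H1 : unit_coef j j = RtoC 0).
  { apply (Hind (unit_coef j)); auto. intros x Hx. rewrite Csum_unit_coef by auto.
    apply NNPP. intros Hn. apply Hno. eauto. }
  unfold unit_coef in H1. rewrite Nat.eqb_refl in H1. apply (f_equal fst) in H1. simpl in H1. lra.
Qed.

Definition basis_sum_sup (al be : R) (n : nat) (B : nat -> R -> C) : R :=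
  real (Lub_Rbar (fun r => exists x, inX al be x /\ r = rsum n (fun j => Cmod (B j x)))).

Definition l1_l2_ratio_max (al be : R) (w : R -> R) (n : nat) (B : nat -> R -> C) : R :=
  maxlist (map (fun j => RInt (fun y => Cmod (B j y) * w y) al be
                         / RInt (fun y => Cmod (B j y) ^ 2 * w y) al be) (seq 0 n)).

Lemma supnorm_ge al be (f : R -> C) x : al <= be -> cont_on_X al be f -> inX al be x ->
  Cmod (f x) <= supnorm al be f.
Proof.
  intros Hab Hf Hx. destruct (cont_on_X_bounded al be f Hab Hf) as [M HM].
  apply (lub_upper _ (Cmod (f x)) M); [eauto | intros r [y [Hy ->]]; auto | eauto].
Qed.

Lemma basis_sum_le al be n (B : nat -> R -> C) x : al <= be ->
  (forall j, (j < n)%nat -> cont_on_X al be (B j)) -> inX al be x ->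
  rsum n (fun j => Cmod (B j x)) <= basis_sum_sup al be n B.
Proof.
  intros Hab HB Hx.
  assert (Hbnd : exists M, forall y, inX al be y -> rsum n (fun j => Cmod (B j y)) <= M).
  { clear Hx. induction n as [|m IH].
    - exists 0. intros. unfold rsum; simpl; lra.
    - destruct IH as [M HM]; [intros; apply HB; lia|].
      destruct (cont_on_X_bounded al be (B m)) as [Mm HMm]; auto.
      exists (M + Mm). intros y Hy. rewrite rsum_S. specialize (HM y Hy). specialize (HMm y Hy). lra. }
  destruct Hbnd as [M HM].
  apply (lub_upper _ (rsum n (fun j => Cmod (B j x))) M);
    [exists x; auto | intros r [y [Hy ->]]; auto | exists x; auto].
Qed.

Section ProjectionBound.

Variables (al be : R) (w : R -> R) (n : nat) (B : nat -> R -> C) (c : R).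
Let s := gram al be w B.
Hypothesis Hlt : al < be.
Hypothesis Hw : cont_on_X al be w.
Hypothesis Hwp : forall x, inX al be x -> 0 < w x.
Hypothesis HB : forall j, (j < n)%nat -> cont_on_X al be (B j).
Hypothesis Hind : lin_indep al be n B.
Hypothesis Htri : forall i j, (i < n)%nat -> (j < n)%nat -> (i + 2 <= j \/ j + 2 <= i)%nat ->
  s i j = RtoC 0.
Hypothesis Hc : c < 1.
Hypothesis Hdom : forall j, (j < n)%nat ->
  (match j with O => 0 | S k => Cmod (s k j) end)
  + (if Nat.ltb (S j) n then Cmod (s j (S j)) else 0) <= c * Cmod (s j j).

Let Hab : al <= be := Rlt_le _ _ Hlt.

(* s_{j,j} = int |B_j|^2 w, which is positive since B_j is not identically 0. *)
Lemma gram_diag j : (j < n)%nat ->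
  Cmod (s j j) = RInt (fun y => Cmod (B j y) ^ 2 * w y) al be
  /\ 0 < RInt (fun y => Cmod (B j y) ^ 2 * w y) al be.
Proof.
  intros Hj.
  assert (Hpos : 0 < RInt (fun y => Cmod (B j y) ^ 2 * w y) al be).
  { destruct (lin_indep_nonzero al be n B j Hind Hj) as [x0 [Hx0 Hne]].
    rewrite (RInt_ext _ (fun y => Cmod (B j (clamp al be y)) ^ 2 * w (clamp al be y)))
      by (intros; rewrite clamp_id; auto; apply inX_Rmin_Rmax; auto; lra).
    apply (RInt_pos _ al be x0); auto.
    - intros x. simpl. cont_real; try apply cont_Cmod; apply cont_clamp; auto.
    - intros x Hx. cbv beta. rewrite clamp_id by auto. specialize (Hwp x Hx). nra.
    - cbv beta. rewrite clamp_id by auto. specialize (Hwp x0 Hx0).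
      assert (0 < Cmod (B j x0)) by (apply Cmod_gt_0; assumption).
      apply Rmult_lt_0_compat; [apply pow_lt|]; assumption. }
  split; [|exact Hpos].
  unfold s, gram. rewrite inner_self, Cmod_R by auto. apply Rabs_right. lra.
Qed.

(* Since |s_{k,l}| = |s_{l,k}|, row dominance of the tridiagonal S is
   column dominance. *)
Lemma gram_col_dominant j : (j < n)%nat -> offdiag_col_sum n s j <= c * Cmod (s j j).
Proof.
  intros Hj.
  assert (Hsym : forall k l, (k < n)%nat -> (l < n)%nat -> Cmod (s k l) = Cmod (s l k)).
  { intros k l Hk Hl. unfold s, gram. rewrite inner_conj_sym by auto. apply Cmod_conj. }
  unfold offdiag_col_sum. rewrite rsum_band.
  2: { intros k Hk Hband. rewrite Htri by lia. apply Cmod_0. }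
  assert (Hleft : match j with O => 0 | S p => if Nat.ltb p n then Cmod (s p j) else 0 end
                 = match j with O => 0 | S p => Cmod (s p j) end).
  { destruct j as [|p]; [reflexivity|]. destruct (Nat.ltb_spec p n); [reflexivity | lia]. }
  assert (Hright : (if Nat.ltb (S j) n then Cmod (s (S j) j) else 0)
                 = (if Nat.ltb (S j) n then Cmod (s j (S j)) else 0)).
  { destruct (Nat.ltb_spec (S j) n); [apply Hsym; lia | reflexivity]. }
  rewrite Hleft, Hright. apply Hdom, Hj.
Qed.

Lemma proj_coef_bound (f g : R -> C) (a : nat -> C) :
  cont_on_X al be f -> is_proj al be w n B f g ->
  (forall x, inX al be x -> g x = Csum n (fun k => a k * B k x)%C) ->
  forall k, (k < n)%nat ->
  Cmod (a k) <= supnorm al be f * l1_l2_ratio_max al be w n B / (1 - c).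
Proof.
  intros Hf [_ Horth] Ha.
  apply (diag_dominant_solution_bound n s a (fun j => inner_w al be w f (B j))); auto.
  - intros j Hj. destruct (gram_diag j Hj) as [-> ?]. auto.
  - exact gram_col_dominant.
  - intros j Hj. symmetry. apply (normal_equation al be w Hab Hw n B f g a j); auto.
    apply Horth. exists (unit_coef j). intros x Hx. symmetry. apply Csum_unit_coef; auto.
  - intros j Hj. destruct (gram_diag j Hj) as [-> HQ].
    eapply Rle_trans; [apply (inner_bound al be w Hab Hw f (B j) (supnorm al be f)); auto;
      intros; apply supnorm_ge; auto|].
    rewrite Rmult_assoc. apply Rmult_le_compat_l.
    + eapply Rle_trans; [apply Cmod_ge_0 | apply (supnorm_ge al be f al); auto; unfold inX; lra].
    + apply Rle_div_l; [lra|].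
      apply maxlist_ge, in_map_iff. exists j. split; [reflexivity | apply in_seq; lia].
Qed.

Lemma proj_ratio_bound (f g : R -> C) :
  cont_on_X al be f -> (exists x, inX al be x /\ f x <> RtoC 0) -> is_proj al be w n B f g ->
  supnorm al be g / supnorm al be f
  <= basis_sum_sup al be n B / (1 - c) * l1_l2_ratio_max al be w n B.
Proof.
  intros Hf [x0 [Hx0 Hf0]] Hproj.
  set (Fs := supnorm al be f). set (K := l1_l2_ratio_max al be w n B).
  assert (HFs : 0 < Fs).
  { apply Rlt_le_trans with (Cmod (f x0)); [apply Cmod_gt_0; assumption | apply supnorm_ge; auto]. }
  assert (HK0 : 0 <= K) by apply maxlist_ge0.
  assert (HS0 : 0 <= basis_sum_sup al be n B).
  { eapply Rle_trans; [apply (rsum_ge0 n (fun j => Cmod (B j x0))); intros; apply Cmod_ge_0|].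
    apply basis_sum_le; auto. }
  assert (Hcoef0 : 0 <= Fs * K / (1 - c))
    by (apply Rmult_le_pos; [nra | apply Rlt_le, Rinv_0_lt_compat; lra]).
  apply Rle_div_l; [lra|].
  replace (basis_sum_sup al be n B / (1 - c) * K * Fs)
    with (Fs * K / (1 - c) * basis_sum_sup al be n B) by (field; lra).
  pose proof Hproj as [[a Ha] _].
  apply lub_le; [|apply Rmult_le_pos; assumption].
  intros r [x [Hx ->]]. rewrite (Ha x Hx).
  eapply Rle_trans; [apply Cmod_Csum|].
  eapply Rle_trans; [apply (rsum_le _ _ (fun k => Fs * K / (1 - c) * Cmod (B k x)))|].
  - intros k Hk. rewrite Cmod_mult. apply Rmult_le_compat_r; [apply Cmod_ge_0|].
    apply (proj_coef_bound f g); auto.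
  - rewrite <- rsum_mult_l. apply Rmult_le_compat_l; [assumption|]. apply basis_sum_le; auto.
Qed.

End ProjectionBound.

Theorem mainTheorem12 (al be : R) (w : R -> R) (n : nat) (B : nat -> R -> C) (c : R) :
  al < be ->
  cont_on_X al be w ->
  (forall x, inX al be x -> 0 < w x) ->
  (forall j, (j < n)%nat -> cont_on_X al be (B j)) ->
  lin_indep al be n B ->
  (* S tridiagonal *)
  (forall i j, (i < n)%nat -> (j < n)%nat -> (i + 2 <= j \/ j + 2 <= i)%nat ->
     gram al be w B i j = RtoC 0) ->
  0 < c < 1 ->
  (* row diagonal dominance, with s_{0,1} = s_{n,n+1} = 0 (1-indexed) *)
  (forall j, (j < n)%nat ->
     (match j with O => 0 | S k => Cmod (gram al be w B k j) end)
     + (if Nat.ltb (S j) n then Cmod (gram al be w B j (S j)) else 0)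
     <= c * Cmod (gram al be w B j j)) ->
  Rbar_le (opnorm_proj al be w n B)
    (Finite
      (real (Lub_Rbar (fun r => exists x, inX al be x /\
                 r = fold_right Rplus 0 (map (fun j => Cmod (B j x)) (seq 0 n))))
       / (1 - c)
       * maxlist (map (fun j =>
            RInt (fun y => Cmod (B j y) * w y) al be
            / RInt (fun y => Cmod (B j y) ^ 2 * w y) al be) (seq 0 n)))).
Proof.
  intros Hab Hw Hwp HB Hind Htri Hc Hdom.
  change (Rbar_le (opnorm_proj al be w n B)
            (basis_sum_sup al be n B / (1 - c) * l1_l2_ratio_max al be w n B)).
  apply (proj2 (Lub_Rbar_correct _)).
  intros r [f [g [Hf [Hnz [Hproj ->]]]]].
  apply proj_ratio_bound; auto; lra.
Qed.
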